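(* For $p=1$, the eigenvalues of the boundary-cell operator $M^{-1}(K^s-K^R+K^{SB})$ are $$\lambda_{\pm}(d)=3d-2\pm\sqrt{9d^2-12d-2},$$ while those of the interior-cell operator $M^{-1}(K^s-K^R)$ are $-2\pm\sqrt{2}\,i$. Moreover, for $d\in[-1,1]$, both $\lambda_+(d)$ and $\lambda_-(d)$ have strictly negative real part if and only if $d<2/3$.
   Context: Setting: the linear advection equation $\partial_t u+\partial_x u=s(x)$ (velocity $1$) with a Dirichlet condition $u=u_D$ at the left physical boundary $\bar x$. Uniform mesh of cells $\Omega_e=[x_{e-1/2},x_{e+1/2}]$, $e=1,\dots,N$, with $x_{1/2}=0$ and cell size $\Delta x=1$. On each cell the approximation space is $\mathbb{P}^p(\Omega_e)$ with basis $\{\phi^e_j\}_{j=0}^p$, where $\phi^e_j(x)=\phi_j(x-(e-1))$ are translates of a fixed basis $\{\phi_j\}$ of $\mathbb{P}^p$ on $[0,1]$. Local matrices (indices $i,j=0,\dots,p$, identical for all cells by translation): mass $M_{ij}=\int_{\Omega_e}\phi^e_i\phi^e_j\,dx$; stiffness $K^s_{ij}=\int_{\Omega_e}\partial_x\phi^e_i\,\phi^e_j\,dx$; right interface $K^R_{ij}=\phi^e_i(x_{e+1/2})\phi^e_j(x_{e+1/2})$. The physical boundary is at $\bar x = x_{1/2}+d$, with $d\in[-1,1]$ ($d<0$: outside the first cell, $d>0$: inside). Shifted boundary polynomial correction with homogeneous data $u_D=0$: the upwind flux at $x_{1/2}$ is $u^\star=-\bigl(u_h(x_{1/2}+d)-u_h(x_{1/2})\bigr)$,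 with $u_h$ the (polynomially extended) solution of cell 1, giving the matrix $K^{SB}_{ij}=-\phi^1_i(x_{1/2})\bigl(\phi^1_j(x_{1/2}+d)-\phi^1_j(x_{1/2})\bigr)$. The square root denotes any complex square root (the pair $\lambda_\pm$ is independent of the choice). *)

From HB Require Import structures.
From mathcomp Require Import all_boot all_order all_algebra.
From mathcomp Require Import complex.
Set Implicit Arguments. Unset Strict Implicit. Unset Printing Implicit Defensive.
Import Order.TTheory GRing.Theory Num.Theory.
Local Open Scope ring_scope.

Section DG.
Variable R : rcfType.

(* Exact integral over [0,1] of a polynomial q: \int_0^1 q = \sum_i q_i/(i+1). *)
Definition int01 (q : {poly R}) : R := \sum_(i < size q) q`_i / (i.+1)%:R.

Definition is_Pbasis (p : nat) (phi : 'I_p.+1 -> {poly R}) : Prop :=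
  (forall j, size (phi j) <= p.+1)%N /\
  (\matrix_(i < p.+1, k < p.+1) (phi i)`_k) \in unitmx.

(* Local matrices.  By translation invariance they are computed on the first
   cell Omega_1 = [x_{1/2}, x_{3/2}] = [0,1], where phi^1_j = phi_j. *)
Definition massM p (phi : 'I_p.+1 -> {poly R}) : 'M[R]_p.+1 :=
  \matrix_(i, j) int01 (phi i * phi j).
Definition stiffK p (phi : 'I_p.+1 -> {poly R}) : 'M[R]_p.+1 :=
  \matrix_(i, j) int01 ((phi i)^`() * phi j).
Definition rightK p (phi : 'I_p.+1 -> {poly R}) : 'M[R]_p.+1 :=
  \matrix_(i, j) ((phi i).[1] * (phi j).[1]).
(* Shifted-boundary correction, boundary at x_{1/2} + d = d. *)
Definition sbK p (phi : 'I_p.+1 -> {poly R}) (d : R) : 'M[R]_p.+1 :=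
  \matrix_(i, j) (- ((phi i).[0] * ((phi j).[d] - (phi j).[0]))).

Definition boundaryOp p (phi : 'I_p.+1 -> {poly R}) (d : R) : 'M[R]_p.+1 :=
  invmx (massM phi) *m (stiffK phi - rightK phi + sbK phi d).
Definition interiorOp p (phi : 'I_p.+1 -> {poly R}) : 'M[R]_p.+1 :=
  invmx (massM phi) *m (stiffK phi - rightK phi).

Definition ceig n (A : 'M[R]_n) (mu : R[i]) : bool :=
  eigenvalue (map_mx (fun x : R => x%:C%C) A) mu.

End DG.

From HB Require Import structures.
From mathcomp Require Import all_boot all_order all_algebra.
From mathcomp Require Import complex.
From mathcomp Require Import ring lra.
Import Order.TTheory GRing.Theory Num.Theory.
Local Open Scope ring_scope.

(* For p = 1 every local matrix is congruent, through the coefficient matrix C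
   of the basis, to its value in the monomial basis {1, x}; hence
   det (mu M - (K^s - K^R + K^SB)) = det(C)^2 / 12 * ((mu - (3d - 2))^2 - (9d^2 - 12d - 2)),
   whose roots are the lambda_+-(d); the interior operator is the case d = 0.
   Writing b = 3d - 2, the discriminant is b^2 - 6 < b^2, so both roots b +- s
   have negative real part exactly when b < 0. *)

Lemma det_mx22 (F : comNzRingType) (A : 'M[F]_2) :
  \det A = A 0 0 * A 1 1 - A 0 1 * A 1 0.
Proof.
rewrite (expand_det_row _ ord0) !big_ord_recr big_ord0 /= add0r.
rewrite /cofactor !det_mx11 !mxE /= expr0 expr1 !mul1r mulN1r mulrN.
by congr (A _ _ * A _ _ - A _ _ * A _ _); apply/val_inj.
Qed.

Lemma eigenvalue_invmx_mul (F : fieldType) n (M A : 'M[F]_n) a :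
  M \in unitmx -> eigenvalue (invmx M *m A) a = (\det (a *: M - A) == 0).
Proof.
move=> uM; have detM_neq0 : \det M != 0 by rewrite -unitfE -unitmxE.
transitivity (\det (a%:M - invmx M *m A) == 0).
  apply/eigenvalueP/det0P => [[v Av v_neq0] | [v v_neq0 Av]]; exists v => //.
    by rewrite mulmxBr Av mul_mx_scalar subrr.
  by apply/eqP; rewrite -mul_mx_scalar eq_sym -subr_eq0 -mulmxBr Av.
have -> : a%:M - invmx M *m A = invmx M *m (a *: M - A).
  by rewrite mulmxBr -scalemxAr mulVmx // scalemx1.
by rewrite det_mulmx mulf_eq0 det_inv invr_eq0 (negbTE detM_neq0).
Qed.

Lemma eq_shift_roots (R : rcfType) (c s mu : R[i]) :
  ((mu - c) ^+ 2 == s ^+ 2) = ((mu == c + s) || (mu == c - s)).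
Proof. by rewrite eqf_sqr !subr_eq addrC [- s + c]addrC. Qed.

Lemma Re_shift_sqrt_lt0 (R : rcfType) (b D : R) (s : R[i]) :
  s ^+ 2 = D%:C%C ->
  (complex.Re (b%:C%C + s) < 0 /\ complex.Re (b%:C%C - s) < 0) <->
  (b < 0 /\ D < b ^+ 2).
Proof.
case: s => x y; rewrite expr2 /= => -[sq_re sq_im].
have /eqP : x * y = 0 by lra.
rewrite mulf_eq0 => /orP[/eqP x0 | /eqP y0]; subst; split; nra.
Qed.

Section DegreeOne.
Variable R : rcfType.
Implicit Types p q : {poly R}.

Lemma int01_widen {q n} : (size q <= n)%N ->
  int01 q = \sum_(i < n) q`_i / (i.+1)%:R.
Proof.
move=> size_q; rewrite /int01 (big_ord_widen _ (fun i => q`_i / (i.+1)%:R) size_q).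
rewrite big_mkcond; apply: eq_bigr => i _; case: ifPn => // /negbTE.
by rewrite ltnNge => /negbFE hi; rewrite nth_default // mul0r.
Qed.

Lemma size_mul_linear {p q} : (size p <= 2)%N -> (size q <= 2)%N ->
  (size (p * q)%R <= 3)%N.
Proof.
move=> hp hq; apply: leq_trans (size_polyMleq _ _) _.
by case: (size p) hp => [|[|[|]]] //; case: (size q) hq => [|[|[|]]].
Qed.

Lemma int01_mul_linear p q : (size p <= 2)%N -> (size q <= 2)%N ->
  int01 (p * q) =
  p`_0 * q`_0 + (p`_0 * q`_1 + p`_1 * q`_0) / 2 + p`_1 * q`_1 / 3.
Proof.
move=> hp hq; rewrite (int01_widen (size_mul_linear hp hq)).
rewrite !big_ord_recr big_ord0 /= !coefM !big_ord_recr !big_ord0 /= !subSS !subn0.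
by rewrite !(nth_default 0 hp) !(nth_default 0 hq); field.
Qed.

Lemma int01_deriv_mul_linear p q : (size p <= 2)%N -> (size q <= 2)%N ->
  int01 (p^`() * q) = p`_1 * q`_0 + p`_1 * q`_1 / 2.
Proof.
move=> hp hq; have hp' : (size p^`() <= 2)%N.
  exact: leq_trans (size_poly _ _) (leq_trans (leq_pred _) hp).
rewrite (int01_widen (size_mul_linear hp' hq)).
rewrite !big_ord_recr big_ord0 /= !coefM !big_ord_recr !big_ord0 /= !coef_deriv.
rewrite !subSS !subn0 !(nth_default 0 hq) (nth_default 0 hp) //.
by rewrite (nth_default 0 (leq_trans hp (leqnSn 2))); field.
Qed.

Lemma horner_linear p x : (size p <= 2)%N -> p.[x] = p`_0 + p`_1 * x.
Proof.
move=> hp; rewrite (horner_coef_wide _ hp) !big_ord_recr big_ord0 /=.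
by rewrite expr0 expr1 mulr1 add0r.
Qed.

Section LinearBasis.
Variable phi : 'I_2 -> {poly R}.
Hypothesis phi_linear : forall j, (size (phi j) <= 2)%N.

Definition basis_det : R :=
  (phi 0)`_0 * (phi 1)`_1 - (phi 0)`_1 * (phi 1)`_0.

Lemma det_massM : \det (massM phi) = basis_det ^+ 2 / 12%:R.
Proof. by rewrite det_mx22 !mxE !int01_mul_linear //; rewrite /basis_det; field. Qed.

Lemma det_boundary_pencil d (mu : R[i]) :
  \det (mu *: map_mx (fun x => x%:C%C) (massM phi) -
        map_mx (fun x => x%:C%C) (stiffK phi - rightK phi + sbK phi d)) =
  (basis_det ^+ 2 / 12%:R)%:C%C *
  ((mu - (3 * d - 2)%:C%C) ^+ 2 - (9 * d ^+ 2 - 12 * d - 2)%:C%C).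
Proof.
rewrite det_mx22 !mxE !int01_deriv_mul_linear // !int01_mul_linear //.
by rewrite !horner_linear // /basis_det; field.
Qed.

End LinearBasis.

Variable phi : 'I_2 -> {poly R}.
Hypothesis phi_basis : is_Pbasis phi.
Let phi_linear : forall j, (size (phi j) <= 2)%N := proj1 phi_basis.

Lemma basis_det_neq0 : basis_det phi != 0.
Proof. by case: phi_basis => _; rewrite unitmxE det_mx22 unitfE !mxE. Qed.

Lemma massM_unit : massM phi \in unitmx.
Proof.
rewrite unitmxE det_massM //.
by rewrite unitfE mulf_neq0 ?invr_eq0 ?pnatr_eq0 // expf_neq0 // basis_det_neq0.
Qed.

Lemma ceig_boundaryOp d (mu : R[i]) :
  ceig (boundaryOp phi d) mu =
  ((mu - (3 * d - 2)%:C%C) ^+ 2 == (9 * d ^+ 2 - 12 * d - 2)%:C%C).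
Proof.
rewrite /ceig /boundaryOp map_mxM map_invmx eigenvalue_invmx_mul ?map_unitmx ?massM_unit //.
rewrite det_boundary_pencil //.
rewrite mulf_eq0 subr_eq0 orb_idl // => /eqP/complexI/eqP.
by rewrite mulf_eq0 invr_eq0 pnatr_eq0 orbF expf_eq0 (negbTE basis_det_neq0).
Qed.

Lemma interiorOp_boundaryOp : interiorOp phi = boundaryOp phi 0.
Proof.
rewrite /interiorOp /boundaryOp (_ : sbK phi 0 = 0) ?addr0 //.
by apply/matrixP => i j; rewrite !mxE subrr mulr0 oppr0.
Qed.

End DegreeOne.

Theorem mainTheorem3 (R : rcfType) :
  (forall phi : 'I_2 -> {poly R}, is_Pbasis phi ->
     (forall d : R, -1 <= d <= 1 ->
        forall s : R[i], s ^+ 2 = (9 * d ^+ 2 - 12 * d - 2)%:C%C ->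
        forall mu : R[i],
          ceig (boundaryOp phi d) mu =
          ((mu == (3 * d - 2)%:C%C + s) || (mu == (3 * d - 2)%:C%C - s)))
     /\
     (forall mu : R[i],
        ceig (interiorOp phi) mu =
        ((mu == (-2)%:C%C + (Num.sqrt 2)%:C%C * 'i%C) ||
         (mu == (-2)%:C%C - (Num.sqrt 2)%:C%C * 'i%C))))
  /\
  (forall d : R, -1 <= d <= 1 ->
     forall s : R[i], s ^+ 2 = (9 * d ^+ 2 - 12 * d - 2)%:C%C ->
     ((complex.Re ((3 * d - 2)%:C%C + s) < 0) /\ (complex.Re ((3 * d - 2)%:C%C - s) < 0)
      <-> d < 2 / 3)).
Proof.
split=> [phi phi_basis | d _ s sq_s]; last first.
  rewrite (Re_shift_sqrt_lt0 _ _ _ _ sq_s).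
  have -> : (3 * d - 2) ^+ 2 = 9 * d ^+ 2 - 12 * d - 2 + 6 by ring.
  by split=> [[] | ?]; [lra | split; lra].
split=> [d _ s sq_s mu | mu].
  by rewrite ceig_boundaryOp // -sq_s eq_shift_roots.
have sq_sqrt2i : ((Num.sqrt 2)%:C%C * 'i%C) ^+ 2 = (9 * 0 ^+ 2 - 12 * 0 - 2 : R)%:C%C.
  rewrite exprMn sqr_i -rmorphXn sqr_sqrtr ?ler0n // expr0n /= !mulr0 subr0 sub0r.
  by rewrite rmorphN mulrN1.
rewrite interiorOp_boundaryOp ceig_boundaryOp // -sq_sqrt2i eq_shift_roots.
by rewrite mulr0 sub0r.
Qed.
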